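(* Let $\mathcal A=\{a_1,\dots,a_m\}\subseteq(\mathbb Z^d)^*$ be vectors such that there exist $\lambda_1,\dots,\lambda_m\ge0$, not all $0$, with $\sum_i\lambda_ia_i=0$, let $A$ be the $m\times d$ matrix with rows $a_1,\dots,a_m$, let $\mathbf 1\in\mathbb R^m$ be the all-ones vector, and let $\varepsilon>0$. Then the set \[ \{c\in\mathbb R\mid 0<c\le\varepsilon^{-1}\text{ and } Ax+c\mathbf 1\in\mathbb Z^m\text{ for some }x\in\mathbb R^d\} \] is finite. Moreover, if $P$ is a $d$-dimensional lattice polytope with core normals $a_1,\dots,a_m$ and $c=\operatorname{qcd}(P)^{-1}$, then there is a rational $y$ with $Ay+c\mathbf 1\in\mathbb Z^m$.
   Context: A $d$-dimensional lattice polytope is written $P=\{x\in\mathbb R^d\mid \langle a_i,x\rangle\le b_i,\ 1\le i\le n\}$ with an irredundant system, primitive $a_i\in(\mathbb Z^d)^*$ and (since $P$ is a lattice polytope) integers $b_i$. For rational $c>0$, $P^{(c)}=\{x\mid \langle a_i,x\rangle\le b_i-c\ \forall i\}$; $\operatorname{qcd}(P)^{-1}=\max\{c>0\mid P^{(c)}\ne\emptyset\}$; with $c_0=\operatorname{qcd}(P)^{-1}$, $\operatorname{core}P=P^{(c_0)}$, and the core normals are those $a_i$ with $\langle a_i,y\rangle=b_i-c_0$ for all $y\in\operatorname{core}P$. *)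

(* Ambient ordered field: an arbitrary archimedean field R
   (the real numbers are the intended instance). *)
From HB Require Import structures.
From mathcomp Require Import all_boot all_order all_algebra.
Set Implicit Arguments. Unset Strict Implicit. Unset Printing Implicit Defensive.
Import Order.TTheory GRing.Theory Num.Theory.
Local Open Scope ring_scope.

Definition pair_row (R : archiRealFieldType) (n d : nat) (a : 'M[int]_(n, d))
  (i : 'I_n) (x : 'cV[R]_d) : R :=
  \sum_(j < d) (a i j)%:~R * x j ord0.

Definition shift_int (R : archiRealFieldType) (m d : nat) (A : 'M[int]_(m, d))
  (x : 'cV[R]_d) (c : R) : Prop :=
  forall i : 'I_m, pair_row A i x + c \is a Num.int.

Definition pos_dependent (R : archiRealFieldType) (m d : nat) (A : 'M[int]_(m, d)) : Prop :=
  exists lam : 'I_m -> R,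
    (forall i, 0 <= lam i) /\ (exists i, lam i != 0) /\
    (forall j : 'I_d, \sum_(i < m) lam i * (A i j)%:~R = 0).
Arguments pos_dependent R {m d} A.

Definition polyH (R : archiRealFieldType) (n d : nat) (a : 'M[int]_(n, d))
  (b : 'I_n -> R) (x : 'cV[R]_d) : Prop :=
  forall i, pair_row a i x <= b i.

Definition intb (R : archiRealFieldType) (n : nat) (b : 'cV[int]_n) : 'I_n -> R :=
  fun i => (b i ord0)%:~R.

Definition polyC (R : archiRealFieldType) (n d : nat) (a : 'M[int]_(n, d))
  (b : 'cV[int]_n) (c : rat) (x : 'cV[R]_d) : Prop :=
  polyH a (fun i => intb R b i - ratr c) x.
Arguments polyC R {n d} a b c x.

Definition in_conv (R : archiRealFieldType) (d : nat) (V : seq 'cV[int]_d)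
  (x : 'cV[R]_d) : Prop :=
  exists t : 'I_(size V) -> R,
    (forall k, 0 <= t k) /\ \sum_k t k = 1 /\
    x = \sum_k t k *: map_mx (fun z : int => z%:~R) (nth 0 V k).

Definition lattice_polytope (R : archiRealFieldType) (d : nat)
  (P : 'cV[R]_d -> Prop) : Prop :=
  exists V : seq 'cV[int]_d, forall x, P x <-> in_conv V x.

Definition full_dim (R : archiRealFieldType) (d : nat) (P : 'cV[R]_d -> Prop) : Prop :=
  exists p : 'I_d.+1 -> 'cV[R]_d,
    (forall k, P (p k)) /\
    \rank (\matrix_(i < d) (p (lift ord0 i) - p ord0)^T) = d.

Definition irredundant (R : archiRealFieldType) (n d : nat) (a : 'M[int]_(n, d))
  (b : 'cV[int]_n) : Prop :=
  forall j : 'I_n, exists x : 'cV[R]_d,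
    (forall i, i != j -> pair_row a i x <= intb R b i) /\
    ~ (pair_row a j x <= intb R b j).
Arguments irredundant R {n d} a b.

Definition primitive_rows (n d : nat) (a : 'M[int]_(n, d)) : Prop :=
  forall i : 'I_n, \big[gcdn/0%N]_(j < d) `|a i j|%N = 1%N.

Definition is_qcd_inv (R : archiRealFieldType) (n d : nat) (a : 'M[int]_(n, d))
  (b : 'cV[int]_n) (c0 : rat) : Prop :=
  0 < c0 /\ (exists x, polyC R a b c0 x) /\
  (forall c : rat, 0 < c -> (exists x, polyC R a b c x) -> c <= c0).
Arguments is_qcd_inv R {n d} a b c0.

Definition core_normal (R : archiRealFieldType) (n d : nat) (a : 'M[int]_(n, d))
  (b : 'cV[int]_n) (c0 : rat) (i : 'I_n) : Prop :=
  forall y : 'cV[R]_d, polyC R a b c0 y -> pair_row a i y = intb R b i - ratr c0.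
Arguments core_normal R {n d} a b c0 i.

Definition rat_vec (R : archiRealFieldType) (d : nat) (y : 'cV[R]_d) : Prop :=
  exists q : 'cV[rat]_d, y = map_mx (fun r : rat => ratr r) q.

From HB Require Import structures.
From mathcomp Require Import all_boot all_order all_algebra.
Import Order.TTheory GRing.Theory Num.Theory.
Local Open Scope ring_scope.

(* Both parts of the theorem rest on one fact of linear algebra: a linear
   system with rational coefficients that is solvable over the ordered field R
   is solvable over Q (row spaces are preserved by the embedding Q -> R).

   Part 1.  Normalising a nonnegative, nontrivial dependence among the a_i by
   its total weight gives an affine dependence sum_i w_i = 1, sum_i w_i a_i = 0
   over R, hence a rational one.  If D is a common denominator of the w_i and
   Ax + c1 is integral, then c = sum_i w_i (<a_i,x> + c) lies in (1/D)Z, so the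
   admissible c in (0, 1/eps] are among the finitely many k/D, k <= D/eps.

   Part 2.  A point X of core P = P^(c0) satisfies <a_i,X> = b_i - c0 for every
   core normal a_i.  The equations tight at X form a rational system, so it has
   a rational solution y, and <a_i,y> + c0 = b_i is an integer for every core
   normal. *)

Lemma rational_solution (R : numFieldType) (p q : nat)
    (M : 'M[rat]_(p, q)) (v : 'rV[rat]_q) (x : 'rV[R]_p) :
  (forall j, \sum_i x 0 i * ratr (M i j) = ratr (v 0 j)) ->
  exists y : 'rV[rat]_p, forall j, \sum_i y 0 i * M i j = v 0 j.
Proof.
move=> Hx.
have xM : x *m map_mx (@ratr R) M = map_mx (@ratr R) v.
  by apply/rowP => j; rewrite !mxE -Hx; apply: eq_bigr => i _; rewrite mxE.
have : (map_mx (@ratr R) v <= map_mx (@ratr R) M)%MS by rewrite -xM submxMl.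
rewrite map_submx => /submxP [y ->]; exists y => j.
by rewrite mxE.
Qed.

Lemma ratr_int {R : archiNumFieldType} (z : rat) :
  z \is a Num.int -> ratr z \is a @Num.int R.
Proof. by move=> Zz; rewrite -(floorK Zz) rmorph_int rpred_int. Qed.

Lemma rational_affine_dependence (R : archiRealFieldType) (m d : nat)
    (A : 'M[int]_(m, d)) :
  pos_dependent R A ->
  exists w : 'I_m -> rat, \sum_i w i = 1 /\
    forall j : 'I_d, \sum_i w i * (A i j)%:~R = 0.
Proof.
move=> [lam [lam_ge0 [[i0 lam_i0] lamA]]].
pose L := \sum_i lam i.
have L_gt0 : 0 < L.
  rewrite /L (bigD1 i0) //=; apply: (@lt_le_trans _ _ (lam i0)).
    by rewrite lt_def lam_i0 lam_ge0.
  by rewrite lerDl sumr_ge0.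
(* the column d of the extended matrix encodes the normalisation sum w = 1 *)
pose M : 'M[rat]_(m, d.+1) :=
  \matrix_(i, j) (if unlift ord_max j is Some j' then (A i j')%:~R else 1).
pose v : 'rV[rat]_d.+1 := \row_j (if unlift ord_max j is Some _ then 0 else 1).
have [y Hy] : exists y : 'rV[rat]_m, forall j, \sum_i y 0 i * M i j = v 0 j.
  apply: (@rational_solution R _ _ M v (\row_i (lam i / L))) => j.
  rewrite !mxE; case E: (unlift _ j) => [j'|].
    rewrite rmorph0 -[RHS](mul0r L^-1) -[X in X / L](lamA j') mulr_suml.
    by apply: eq_bigr => i _; rewrite !mxE E rmorph_int mulrAC.
  rewrite rmorph1 -(divff (lt0r_neq0 L_gt0)) /L mulr_suml.
  by apply: eq_bigr => i _; rewrite !mxE E rmorph1 mulr1.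
exists (fun i => y 0 i); split.
  rewrite -[RHS](_ : v 0 ord_max = 1); last by rewrite mxE unlift_none.
  by rewrite -Hy; apply: eq_bigr => i _; rewrite mxE unlift_none mulr1.
move=> j; rewrite -[RHS](_ : v 0 (lift ord_max j) = 0); last by rewrite mxE liftK.
by rewrite -Hy; apply: eq_bigr => i _; rewrite mxE liftK.
Qed.

Lemma common_denominator {m : nat} (w : 'I_m -> rat) :
  exists2 D : int, 0 < D & forall i, w i * D%:~R \is a Num.int.
Proof.
exists (\prod_i denq (w i)); first by apply: prodr_gt0 => i _; apply: denq_gt0.
by move=> i; rewrite (bigD1 i) //= intrM mulrA -numqE rpredM // rpred_int.
Qed.

Lemma shift_from_dependence {R : archiRealFieldType} {m d : nat}
    {A : 'M[int]_(m, d)} {w : 'I_m -> rat} (x : 'cV[R]_d) (c : R) :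
  \sum_i w i = 1 -> (forall j, \sum_i w i * (A i j)%:~R = 0) ->
  c = \sum_i ratr (w i) * (pair_row A i x + c).
Proof.
move=> w_sum1 wA.
under eq_bigr => i _ do rewrite mulrDr.
rewrite big_split /= -mulr_suml -rmorph_sum w_sum1 rmorph1 mul1r.
suff -> : \sum_i ratr (w i) * pair_row A i x = 0 by rewrite add0r.
under eq_bigr => i _ do rewrite /pair_row mulr_sumr.
rewrite exchange_big /= big1 // => j _.
under eq_bigr => i _ do rewrite mulrA -(rmorph_int (@ratr R)) -rmorphM /=.
by rewrite -mulr_suml -rmorph_sum wA rmorph0 mul0r.
Qed.

Lemma shift_denominator {R : archiRealFieldType} {m d : nat}
    {A : 'M[int]_(m, d)} {w : 'I_m -> rat} {D : int} {x : 'cV[R]_d} {c : R} :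
  \sum_i w i = 1 -> (forall j, \sum_i w i * (A i j)%:~R = 0) ->
  (forall i, w i * D%:~R \is a Num.int) -> 0 <= D -> 0 <= c ->
  shift_int A x c -> D%:~R * c \is a Num.nat.
Proof.
move=> w_sum1 wA wD D_ge0 c_ge0 Axc.
rewrite natrEint mulr_ge0 ?ler0z // andbT (shift_from_dependence x c w_sum1 wA).
rewrite mulr_sumr rpred_sum // => i _.
rewrite mulrA -(rmorph_int (@ratr R)) -rmorphM /= rpredM ?ratr_int //.
by rewrite mulrC wD.
Qed.

Lemma bounded_fractions_finite {R : archiNumFieldType} {D : int} (eps : R) :
  0 < D ->
  exists s : seq R, forall c : R,
    0 <= c -> c <= eps^-1 -> D%:~R * c \is a Num.nat -> c \in s.
Proof.
move=> D_gt0; have D_gt0R : (0 : R) < D%:~R by rewrite ltr0z.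
exists [seq k%:R / D%:~R | k <- iota 0 (Num.truncn (D%:~R / eps)).+1].
move=> c c_ge0 c_le Dc; apply/mapP; exists (Num.truncn (D%:~R * c)).
  rewrite mem_iota add0n ltnS; apply: le_truncn.
  by rewrite ler_wpM2l // ltW.
by rewrite truncnK // [_ * c]mulrC mulfK // lt0r_neq0.
Qed.

Lemma finitely_many_shifts (R : archiRealFieldType) (m d : nat)
    (A : 'M[int]_(m, d)) :
  pos_dependent R A -> forall eps : R, 0 < eps ->
  exists s : seq R, forall c : R,
    (0 < c /\ c <= eps^-1 /\ exists x : 'cV[R]_d, shift_int A x c) -> c \in s.
Proof.
move=> /rational_affine_dependence [w [w_sum1 wA]] eps _.
have [D D_gt0 wD] := common_denominator w.
have [s Hs] := bounded_fractions_finite eps D_gt0.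
exists s => c [c_gt0 [c_le [x Axc]]]; apply: Hs => //; first exact: ltW.
exact: (shift_denominator w_sum1 wA wD (ltW D_gt0) (ltW c_gt0) Axc).
Qed.

Lemma rational_point_on_face {R : archiRealFieldType} {n d : nat}
    (a : 'M[int]_(n, d)) (t : 'I_n -> rat) (X : 'cV[R]_d) :
  exists y : 'cV[rat]_d, forall i,
    pair_row a i X = ratr (t i) ->
    pair_row a i (map_mx (fun r : rat => ratr r : R) y) = ratr (t i).
Proof.
pose tight i := pair_row a i X == ratr (t i).
pose M : 'M[rat]_(d, n) := \matrix_(j, i) (if tight i then (a i j)%:~R else 0).
pose v : 'rV[rat]_n := \row_i (if tight i then t i else 0).
have [y Hy] : exists y : 'rV[rat]_d, forall i, \sum_j y 0 j * M j i = v 0 i.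
  apply: (@rational_solution R _ _ M v (\row_j X j ord0)) => i.
  rewrite !mxE; case: ifP => tight_i.
    rewrite -(eqP tight_i); apply: eq_bigr => j _.
    by rewrite !mxE tight_i rmorph_int mulrC.
  by rewrite rmorph0 big1 // => j _; rewrite !mxE tight_i rmorph0 mulr0.
exists y^T => i X_on_i; have tight_i : tight i by apply/eqP.
have := Hy i; rewrite mxE tight_i => <-; rewrite rmorph_sum.
by apply: eq_bigr => j _; rewrite !mxE tight_i rmorphM /= rmorph_int mulrC.
Qed.

Lemma rational_core_shift (R : archiRealFieldType) (n d : nat)
    (a : 'M[int]_(n, d)) (b : 'cV[int]_n) (c0 : rat) :
  is_qcd_inv R a b c0 ->
  exists y : 'cV[R]_d, rat_vec y /\
    forall i : 'I_n, core_normal R a b c0 i ->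
      pair_row a i y + ratr c0 \is a Num.int.
Proof.
move=> [_ [[X X_core] _]].
have [y Hy] := rational_point_on_face a (fun i => (b i ord0)%:~R - c0) X.
exists (map_mx (fun r : rat => ratr r) y); split; first by exists y.
move=> i core_i; rewrite Hy.
  by rewrite rmorphB /= rmorph_int subrK rpred_int.
by rewrite (core_i X X_core) rmorphB /= rmorph_int.
Qed.

Theorem mainTheorem7 (R : archiRealFieldType) (d : nat) :
  (forall (m : nat) (A : 'M[int]_(m, d)), pos_dependent R A ->
     forall eps : R, 0 < eps ->
       exists s : seq R, forall c : R,
         (0 < c /\ c <= eps^-1 /\ exists x : 'cV[R]_d, shift_int A x c) ->
         c \in s)
  /\
  (forall (n : nat) (a : 'M[int]_(n, d)) (b : 'cV[int]_n),
     lattice_polytope (polyH a (intb R b)) ->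
     full_dim (polyH a (intb R b)) ->
     irredundant R a b ->
     primitive_rows a ->
     forall c0 : rat, is_qcd_inv R a b c0 ->
       exists y : 'cV[R]_d, rat_vec y /\
         forall i : 'I_n, core_normal R a b c0 i ->
           pair_row a i y + ratr c0 \is a Num.int).
Proof.
split; first by move=> m A; exact: finitely_many_shifts.
by move=> n a b _ _ _ _ c0; exact: rational_core_shift.
Qed.
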